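(* Let $M$ be a matroid of rank at least $1$ having two disjoint bases. Then $\chi(\operatorname{KG}(M))=f(M)$.
   Context: The matroid Kneser graph $\operatorname{KG}(M)$ has the bases of $M$ as vertices, two bases being adjacent when they are disjoint; $\chi$ denotes chromatic number. For a matroid $M$, $\mathcal{B}(M)$ denotes its set of bases, and the distance between two bases $B,B'$ is $|B\triangle B'|$; $\operatorname{diam}$ denotes diameter. The Borsuk number $f(M)$ is the minimum number of parts in a partition of $\mathcal{B}(M)$ in which every part has diameter strictly smaller than $\operatorname{diam}(\mathcal{B}(M))$; if $M$ has exactly one basis, $f(M):=+\infty$. *)

From mathcomp Require Import all_boot.
Set Implicit Arguments. Unset Strict Implicit. Unset Printing Implicit Defensive.

Record matroid (T : finType) := Matroid {
  bases : {set {set T}};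
  bases_nonempty : bases != set0;
  bases_exchange : forall B1 B2, B1 \in bases -> B2 \in bases ->
    forall x, x \in B1 :\: B2 ->
    exists2 y, y \in B2 :\: B1 & y |: (B1 :\ x) \in bases
}.

Section Defs.
Variable T : finType.
Implicit Types (M : matroid T) (S : {set {set T}}) (B : {set T}).

Definition rank M : nat :=
  if [pick B in bases M] is Some B then #|B| else 0.

Definition bdist B B' : nat := #|(B :\: B') :|: (B' :\: B)|.

Definition diam S : nat := \max_(B in S) \max_(B' in S) bdist B B'.

Definition kg_adj M B B' : bool :=
  [&& B \in bases M, B' \in bases M & [disjoint B & B']].

Definition kg_colorable M (k : nat) : bool :=
  [exists c : {ffun {set T} -> 'I_k},
     [forall B, forall B', kg_adj M B B' ==> (c B != c B')]].

(* chromatic number of KG(M); None if no proper colouring exists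
   (only possible when KG(M) has a loop, i.e. the empty basis). Any proper
   colouring can be taken with at most #|{set T}| colours, so the search
   range is complete. *)
Definition chi_KG M : option nat :=
  omap (@nat_of_ord _)
    [pick k : 'I_(#|{set T}|.+1) | kg_colorable M k &&
       [forall j : 'I_(#|{set T}|.+1), (j < k) ==> ~~ kg_colorable M j]].

Definition borsuk_partitionable M (k : nat) : bool :=
  [exists P : {set {set {set T}}},
     [&& partition P (bases M), #|P| == k &
         [forall S in P, diam S < diam (bases M)]]].

(* Borsuk number f(M); None encodes +infinity (M has exactly one basis).
   A partition has at most #|bases M| <= #|{set T}| parts. *)
Definition borsuk M : option nat :=
  if #|bases M| == 1 then None
  else omap (@nat_of_ord _)
    [pick k : 'I_(#|{set T}|.+1) | borsuk_partitionable M k &&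
       [forall j : 'I_(#|{set T}|.+1), (j < k) ==> ~~ borsuk_partitionable M j]].

End Defs.

From mathcomp Require Import all_boot.
From mathcomp Require Import zify.
Set Implicit Arguments. Unset Strict Implicit. Unset Printing Implicit Defensive.

(* All bases have the same size r, so |B △ B'| = 2r - 2|B ∩ B'|.  When two
   disjoint bases exist the diameter of B(M) is 2r, and a family of bases has
   diameter < 2r exactly when it contains no two disjoint bases, i.e. when it
   is an independent set of KG(M).  Borsuk partitions of B(M) are therefore
   the colour-class partitions of proper colourings of KG(M). *)

Definition intersecting (T : finType) (S : {set {set T}}) : bool :=
  [forall B in S, forall B' in S, ~~ [disjoint B & B']].

(* [chi_KG] and [borsuk] (off the one-basis case) unfold to [least_below #|{set T}|]. *)
Definition least_below (N : nat) (P : pred nat) : option nat :=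
  omap (@nat_of_ord _)
    [pick k : 'I_N.+1 | P k && [forall j : 'I_N.+1, (j < k) ==> ~~ P j]].

Lemma least_belowE N (P : pred nat) m :
  m <= N -> P m -> (forall j, j < m -> ~~ P j) -> least_below N P = Some m.
Proof.
move=> le_mN Pm min_m; rewrite /least_below.
case: pickP => [k /andP[Pk /forallP min_k] | none] /=.
  congr Some; case: (ltngtP k m) => // [lt_km | lt_mk].
    by move: (min_m _ lt_km); rewrite Pk.
  by have := min_k (inord m); rewrite inordK ?ltnS // lt_mk Pm.
have := none (inord m); rewrite inordK ?ltnS // Pm /=.
by move/negP; case; apply/forallP => j; apply/implyP; apply: min_m.
Qed.

Lemma eq_least_below N (P Q : pred nat) :
  (forall k, Q k -> P k) -> (forall k, P k -> exists2 j, j <= k & Q j) ->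
  (exists2 k, k <= N & P k) -> least_below N P = least_below N Q.
Proof.
move=> QP PQ [k0 le_k0N /PQ [j0 le_j0k0 Qj0]].
have [m Qm min_m] := ex_minnP (ex_intro Q j0 Qj0).
have le_mN : m <= N by rewrite (leq_trans (min_m _ Qj0)) // (leq_trans le_j0k0).
rewrite (@least_belowE N Q m) //; last first.
  by move=> j lt_jm; apply/negP => /min_m; rewrite leqNgt lt_jm.
apply: least_belowE => // [|j lt_jm]; first exact: QP.
apply/negP => /PQ [i le_ij /min_m]; rewrite leqNgt.
by rewrite (leq_ltn_trans le_ij lt_jm).
Qed.

Section MatroidBases.
Variables (T : finType) (M : matroid T).
Implicit Types (B : {set T}) (S : {set {set T}}).

Lemma leq_card_bases B1 B2 : B1 \in bases M -> B2 \in bases M -> #|B1| <= #|B2|.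
Proof.
move=> + B2_basis; move: {2}#|B1 :\: B2| (erefl #|B1 :\: B2|) => n.
elim: n B1 => [|n IHn] B1 card_diff B1_basis.
  by apply: subset_leq_card; rewrite -setD_eq0 -cards_eq0 card_diff.
have /set0Pn [x x_diff] : B1 :\: B2 != set0 by rewrite -card_gt0 card_diff.
have [y y_diff exchanged] := bases_exchange B1_basis B2_basis x_diff.
move: (x_diff) y_diff; rewrite !inE => /andP[xNB2 xB1] /andP[yNB1 yB2].
have -> : #|B1| = #|y |: (B1 :\ x)|.
  by rewrite cardsU1 (cardsD1 x B1) xB1 !inE (negbTE yNB1) andbF.
apply: IHn => //.
have -> : (y |: (B1 :\ x)) :\: B2 = (B1 :\: B2) :\ x.
  apply/setP => z; rewrite !inE; have [->|_] := eqVneq z y; first by rewrite yB2 !andbF.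
  by rewrite orFb; case: (z \in B2); case: (z == x); case: (z \in B1).
by move: card_diff; rewrite (cardsD1 x (B1 :\: B2)) x_diff; lia.
Qed.

Lemma card_basis B : B \in bases M -> #|B| = rank M.
Proof.
move=> B_basis; rewrite /rank; case: pickP => [B' /= B'_basis|none].
  by apply/eqP; rewrite eqn_leq !leq_card_bases.
by move: (none B); rewrite B_basis.
Qed.

Lemma bdist_bases B B' : B \in bases M -> B' \in bases M ->
  bdist B B' + 2 * #|B :&: B'| = 2 * rank M.
Proof.
move=> B_basis B'_basis; rewrite /bdist cardsU.
have -> : (B :\: B') :&: (B' :\: B) = set0.
  by apply/setP => z; rewrite !inE; case: (z \in B); case: (z \in B').
have := cardsID B' B; have := cardsID B B'; rewrite setIC.
by have := card_basis B_basis; have := card_basis B'_basis; rewrite cards0; lia.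
Qed.

Lemma bdist_bases_leq B B' : B \in bases M -> B' \in bases M ->
  bdist B B' <= 2 * rank M.
Proof. by move=> B_basis B'_basis; have := bdist_bases B_basis B'_basis; lia. Qed.

Lemma bdist_bases_eq B B' : B \in bases M -> B' \in bases M ->
  (bdist B B' == 2 * rank M) = [disjoint B & B'].
Proof.
move=> B_basis B'_basis; rewrite -setI_eq0 -cards_eq0.
by have := bdist_bases B_basis B'_basis; move=> e; apply/eqP/eqP; lia.
Qed.

Lemma diam_bases B1 B2 : B1 \in bases M -> B2 \in bases M ->
  [disjoint B1 & B2] -> diam (bases M) = 2 * rank M.
Proof.
move=> B1_basis B2_basis disj12; apply/eqP; rewrite eqn_leq; apply/andP; split.
  apply/bigmax_leqP => B B_basis; apply/bigmax_leqP => B' B'_basis.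
  exact: bdist_bases_leq.
apply: leq_trans (leq_bigmax_cond _ B1_basis).
apply: leq_trans (leq_bigmax_cond _ B2_basis).
by have /eqP -> : bdist B1 B2 == 2 * rank M by rewrite bdist_bases_eq.
Qed.

Lemma block_sub_bases P S : partition P (bases M) -> S \in P -> S \subset bases M.
Proof. by case/and3P => /eqP <- _ _; apply: bigcup_sup. Qed.

Lemma basis_not_disjoint_self B : 0 < rank M -> B \in bases M -> ~~ [disjoint B & B].
Proof. by move=> rank_gt0 B_basis; rewrite -setI_eq0 setIid -card_gt0 card_basis. Qed.

Lemma diam_lt_intersecting S : 0 < rank M -> S \subset bases M ->
  (diam S < 2 * rank M) = intersecting S.
Proof.
move=> rank_gt0 /subsetP S_bases; apply/idP/idP => [diam_lt | /forallP inter].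
  apply/forallP => B; apply/implyP => BS; apply/forallP => B'; apply/implyP => B'S.
  rewrite -bdist_bases_eq ?S_bases // neq_ltn (leq_ltn_trans _ diam_lt) //.
  exact: leq_trans (leq_bigmax_cond _ B'S) (leq_bigmax_cond _ BS).
rewrite (@leq_ltn_trans (2 * rank M).-1) //; last by lia.
apply/bigmax_leqP => B BS; apply/bigmax_leqP => B' B'S.
have := bdist_bases_leq (S_bases _ BS) (S_bases _ B'S).
have := inter B; rewrite BS => /forallP /(_ B'); rewrite B'S /=.
by rewrite -bdist_bases_eq ?S_bases //; lia.
Qed.

Lemma borsuk_partitionableP k : 0 < rank M -> diam (bases M) = 2 * rank M ->
  reflect (exists2 P, partition P (bases M) /\ #|P| = k & {in P, forall S, intersecting S})
          (borsuk_partitionable M k).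
Proof.
move=> rank_gt0 diam_eq; apply: (iffP existsP) => [] [P].
  case/and3P => P_part /eqP card_P /forallP diam_lt; exists P => // S SP.
  rewrite -diam_lt_intersecting // ?(block_sub_bases P_part SP) //.
  by rewrite -diam_eq (implyP (diam_lt S)).
move=> [P_part card_P] inter; exists P; rewrite P_part card_P eqxx /=.
apply/forallP => S; apply/implyP => SP.
by rewrite diam_eq diam_lt_intersecting ?inter ?(block_sub_bases P_part SP).
Qed.

Lemma kg_colorable_partition P k : partition P (bases M) -> #|P| <= k ->
  {in P, forall S, intersecting S} -> kg_colorable M k.
Proof.
case/and3P => /eqP cover_P _ _ card_P inter_P.
have pblockP B : B \in bases M -> pblock P B \in P.
  by move=> B_basis; rewrite pblock_mem // cover_P.
case: k card_P => [|k] card_P.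
  have /set0Pn [B B_basis] := bases_nonempty M.
  move: card_P; rewrite leqn0 cards_eq0 => /eqP P0.
  by move: (pblockP B B_basis); rewrite P0 inE.
apply/existsP; exists [ffun B => inord (index (pblock P B) (enum P)) : 'I_k.+1].
apply/forallP => B; apply/forallP => B'; apply/implyP => /and3P[B_basis B'_basis disj].
have index_lt B0 : B0 \in bases M -> index (pblock P B0) (enum P) < k.+1.
  by move=> /pblockP ?; rewrite (leq_trans _ card_P) // cardE index_mem mem_enum.
rewrite !ffunE; apply/negP => /eqP/(congr1 val); rewrite /= !inordK ?index_lt //.
move/(index_inj set0); rewrite !mem_enum => /(_ (pblockP _ B_basis) (pblockP _ B'_basis)).
move=> same_block; have := inter_P _ (pblockP _ B_basis).
move=> /forallP /(_ B); rewrite mem_pblock cover_P B_basis /=.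
move=> /forallP /(_ B'); rewrite same_block mem_pblock cover_P B'_basis /=.
by rewrite disj.
Qed.

Lemma partition_kg_colorable k : kg_colorable M k ->
  exists2 P, partition P (bases M) /\ #|P| <= k & {in P, forall S, intersecting S}.
Proof.
case/existsP => c /forallP proper_c; exists (preim_partition c (bases M)).
  split; first exact: preim_partitionP.
  have -> : preim_partition c (bases M) =
    (fun i => [set B in bases M | i == c B]) @: (c @: bases M) by rewrite -imset_comp.
  by rewrite (leq_trans (leq_imset_card _ _)) // (leq_trans (max_card _)) ?card_ord.
move=> _ /imsetP [B0 _ ->]; apply/forallP => B; apply/implyP; rewrite inE.
case/andP => B_basis /eqP cB; apply/forallP => B'; apply/implyP; rewrite inE.
case/andP => B'_basis /eqP cB'; apply/negP => disj.
by move: (proper_c B) => /forallP /(_ B'); rewrite /kg_adj B_basis B'_basis disj -cB -cB' eqxx.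
Qed.

Lemma kg_colorable_card_sets : 0 < rank M -> kg_colorable M #|{set T}|.
Proof.
move=> rank_gt0; apply/existsP; exists [ffun B => enum_rank B].
apply/forallP => B; apply/forallP => B'; apply/implyP => /and3P[B_basis _ disj].
rewrite !ffunE (inj_eq enum_rank_inj).
by apply: contraTneq disj => <-; apply: basis_not_disjoint_self.
Qed.

End MatroidBases.

Theorem lemma4p5 (T : finType) (M : matroid T) :
  1 <= rank M ->
  (exists B1 B2, [/\ B1 \in bases M, B2 \in bases M & [disjoint B1 & B2]]) ->
  chi_KG M = borsuk M.
Proof.
move=> rank_gt0 [B1 [B2 [B1_basis B2_basis disj12]]].
have diam_eq := diam_bases B1_basis B2_basis disj12.
rewrite /chi_KG /borsuk.
have -> : #|bases M| == 1 = false.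
  apply/negbTE; rewrite neq_ltn; apply/orP; right; apply/card_gt1P.
  exists B1, B2; split=> //.
  by apply: contraTneq disj12 => ->; exact: basis_not_disjoint_self B2_basis.
apply: (@eq_least_below _ (kg_colorable M) (borsuk_partitionable M)).
- move=> k /borsuk_partitionableP [//|//|P [P_part <-] inter].
  exact: kg_colorable_partition P_part _ inter.
- move=> k /partition_kg_colorable [P [P_part card_P] inter].
  by exists #|P| => //; apply/borsuk_partitionableP => //; exists P.
- by exists #|{set T}|; last exact: kg_colorable_card_sets.
Qed.
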